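(* Let $K$ be an $\mathbb N$-valued random variable with $\Pr(K=k)=k^{-5/4}/c$ for $k\in\mathbb N$ ($c$ a normalizing constant), and let $(K_i)_{i\in\mathbb N}$ be i.i.d. copies of $K$. Then for almost every realization $(k_i)$ there is $i_0$ such that (1) every record-time $i\geq i_0$ is simple, and (2) $\max\{k_1,\ldots,k_i\}>i$ for all $i\geq i_0$.
   Context: For a sequence $(k_i)_{i\in\mathbb N}$ of natural numbers, $i$ is a record-time if $k_i>k_j$ for all $j<i$, and a non-strict record-time if $k_i\geq k_j$ for all $j<i$. A record-time $i$ is simple if $k_i<k_j$ for every non-strict record-time $j>i$. *)

From HB Require Import structures.
From mathcomp Require Import all_boot all_order all_algebra.
From mathcomp Require Import all_classical all_reals all_analysis.
Set Implicit Arguments. Unset Strict Implicit. Unset Printing Implicit Defensive.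
Import Order.TTheory GRing.Theory Num.Theory.
Local Open Scope classical_set_scope.
Local Open Scope ring_scope.

(* Records of a sequence k : nat -> nat (indices start at 0). *)
Definition record_time (k : nat -> nat) (i : nat) : Prop :=
  forall j, (j < i)%N -> (k j < k i)%N.

Definition nonstrict_record_time (k : nat -> nat) (i : nat) : Prop :=
  forall j, (j < i)%N -> (k j <= k i)%N.

Definition simple_record_time (k : nat -> nat) (i : nat) : Prop :=
  record_time k i /\
  forall j, (i < j)%N -> nonstrict_record_time k j -> (k i < k j)%N.

Definition zeta54 {R : realType} : R :=
  limn (fun n : nat => \sum_(1 <= k < n) ((k%:R : R) `^ (- (5%:R / 4%:R)))).

Definition law54 {R : realType} (k : nat) : R :=
  if k == 0%N then 0 else (k%:R : R) `^ (- (5%:R / 4%:R)) / zeta54.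

Definition mutually_independent {d} {T : measurableType d} {R : realType}
  (P : probability T R) (X : nat -> T -> nat) : Prop :=
  forall (s : seq nat) (A : nat -> set nat), uniq s ->
    P (\bigcap_(i in [set` s]) (X i @^-1` A i)) =
    (\prod_(i <- s) P (X i @^-1` A i))%E.

From HB Require Import structures.
From mathcomp Require Import all_boot all_order all_algebra.
From mathcomp Require Import all_classical all_reals all_analysis.
From mathcomp Require Import ring lra zify.
Import Order.TTheory GRing.Theory Num.Theory.
Set Implicit Arguments. Unset Strict Implicit. Unset Printing Implicit Defensive.
Local Open Scope classical_set_scope.
Local Open Scope ring_scope.

(* Since P(K >= n) is of order n^(-1/4), the probability that the first n
   values are all at most n + 1 is about (1 - n^(-1/4))^n, which is summable
   in n; by Borel-Cantelli, property (2) holds eventually.  A record at i that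
   is not simple is followed by a first repetition j > i of its value m, all
   other values before j being smaller than m.  Summing over i < j, this event
   has probability at most (P(K = m) / P(K >= m))^2 = O(m^-2), again summable
   in m; and by (2) the record value m exceeds i, so m -> oo as i -> oo. *)

Section real_inequalities.
Variable R : realFieldType.

Lemma sum_deriv_geom_le (q : R) N : 0 <= q < 1 ->
  \sum_(j < N) j.+1%:R * q ^+ j <= ((1 - q) ^+ 2)^-1.
Proof.
case/andP => q0 q1.
have closed_form : (1 - q) ^+ 2 * \sum_(j < N) j.+1%:R * q ^+ j =
    1 - N.+1%:R * q ^+ N + N%:R * q ^+ N.+1.
  elim: N => [|N IH]; first by rewrite big_ord0 mulr0 expr0 mulr1 mul0r addr0 subrr.
  by rewrite big_ord_recr /= mulrDr IH !exprS -!nat1r; ring.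
have sq_gt0 : 0 < (1 - q) ^+ 2 by rewrite exprn_gt0 // subr_gt0.
rewrite -(ler_pM2l sq_gt0) mulfV ?gt_eqF // closed_form.
have qN : 0 <= q ^+ N by rewrite exprn_ge0.
have N0 : 0 <= N%:R :> R by rewrite ler0n.
rewrite exprS -nat1r.
have : N%:R * (q * q ^+ N) <= N%:R * q ^+ N by rewrite ler_wpM2l // ler_piMl // ltW.
lra.
Qed.

Lemma sum_inv_consecutive N :
  \sum_(t < N) ((t.+1%:R * t.+2%:R)^-1 : R) = 1 - N.+1%:R^-1.
Proof.
elim: N => [|N IH]; first by rewrite big_ord0 invr1 subrr.
rewrite big_ord_recr /= IH.
have h1 : N.+1%:R != 0 :> R by rewrite pnatr_eq0.
have h2 : N.+2%:R != 0 :> R by rewrite pnatr_eq0.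
by move: h1 h2; rewrite -!nat1r => h1 h2; field; rewrite h1 h2.
Qed.

Lemma bernoulli_ineq (s : R) m : 0 <= s <= 1 -> (1 - s) ^+ m * (1 + m%:R * s) <= 1.
Proof.
case/andP => s0 s1; elim: m => [|m IH]; first by rewrite expr0 mul0r addr0 mulr1.
have h0 : 0 <= (1 - s) ^+ m by rewrite exprn_ge0 // subr_ge0.
have hm : 0 <= m%:R :> R by rewrite ler0n.
have : (1 - s) ^+ m * ((1 - s) * (1 + m.+1%:R * s)) <= (1 - s) ^+ m * (1 + m%:R * s).
  by rewrite ler_wpM2l // -nat1r; nra.
rewrite exprSr -mulrA; lra.
Qed.

(* Bernoulli: (1 - s)^m <= (1 + m s)^-1 <= (m s)^-1, then raise to the 4th power. *)
Lemma exprn_le_inv_pow4 (q s : R) m n : 0 <= q -> 0 < s -> q <= 1 - s ->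
  (0 < m)%N -> (4 * m <= n)%N -> q ^+ n <= ((m%:R * s) ^+ 4)^-1.
Proof.
move=> q0 s0 qs m0 mn.
have q1 : q <= 1 by lra.
have s1 : s <= 1 by lra.
apply: le_trans (ler_wiXn2l q0 q1 mn) _.
have hm : 0 < m%:R * s by rewrite mulr_gt0 // ltr0n.
have hb : (1 - s) ^+ m * (1 + m%:R * s) <= 1 by rewrite bernoulli_ineq // ltW.
have h1 : q ^+ m <= (1 - s) ^+ m by rewrite lerXn2r ?nnegrE // subr_ge0.
rewrite mulnC exprM -exprVn; apply: lerXn2r.
- by rewrite nnegrE exprn_ge0.
- by rewrite nnegrE invr_ge0 ltW.
rewrite -(ler_pM2l hm) mulfV ?gt_eqF //.
have h2 : 0 <= (1 - s) ^+ m by rewrite exprn_ge0 // subr_ge0.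
have : m%:R * s * q ^+ m <= m%:R * s * (1 - s) ^+ m by rewrite ler_wpM2l // ltW.
nra.
Qed.

End real_inequalities.

Lemma prod_nat_if_eq (R : comPzRingType) (a b : R) (i n : nat) : (i < n)%N ->
  \prod_(0 <= l < n) (if l == i then a else b) = a * b ^+ n.-1.
Proof.
elim: n => [//|n IH] lt_in; rewrite big_nat_recr //=.
case: (ltngtP i n) => [{}lt_in|lt_ni|<-]; last first.
- rewrite mulrC; congr (_ * _); rewrite -[X in _ ^+ X]subn0 -prodr_const_nat.
  by apply: eq_big_nat => l /andP[_ /ltn_eqF ->].
- by exfalso; lia.
- by rewrite IH // -mulrA -exprSr prednK //; exact: leq_ltn_trans lt_in.
Qed.

Lemma cube_le_quarter_pow4 t :
  ((t + 8).+1 * t.+1 * t.+2 <= 4096 * ((t + 8) %/ 4) ^ 4)%N.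
Proof.
set m := ((t + 8) %/ 4)%N.
have m2 : (2 <= m)%N by rewrite /m; lia.
apply: (@leq_trans ((8 * m) * (4 * m) * (4 * m))); first by rewrite !leq_mul // /m; lia.
have -> : (8 * m * (4 * m) * (4 * m) = 128 * m ^ 3)%N by rewrite !expnS expn0; ring.
have -> : (4096 * m ^ 4 = (32 * m) * (128 * m ^ 3))%N by rewrite !expnS expn0; ring.
by rewrite leq_pmull // muln_gt0 /=; lia.
Qed.

Definition weight54 {R : realType} (k : nat) : R := (k%:R : R) `^ (- (5%:R / 4%:R)).

Section weight54.
Variable R : realType.
Local Notation w := (@weight54 R).

Lemma weight54E k : w k = ((k%:R : R) `^ (5%:R / 4%:R))^-1.
Proof. by rewrite /weight54 powRN. Qed.

Lemma weight54_gt0 k : (0 < k)%N -> 0 < w k.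
Proof. by move=> k0; rewrite /weight54 powR_gt0 // ltr0n. Qed.

Lemma weight54_nonincreasing m n : (0 < m <= n)%N -> w n <= w m.
Proof.
case/andP => m0 mn; rewrite !weight54E lef_pV2 ?posrE ?powR_gt0 ?ltr0n //;
  last exact: leq_trans mn.
by rewrite ge0_ler_powR ?nnegrE ?ler0n ?ler_nat.
Qed.

Lemma weight54_le_double m : (0 < m)%N -> w m <= 4%:R * w (2 * m).
Proof.
move=> m0; rewrite !weight54E natrM powRM ?ler0n // invfM mulrA.
have e4 : 2%:R `^ 2%:R = 4%:R :> R by rewrite powR_mulrn // expr2 -natrM.
have h2 : 2%:R `^ (5%:R / 4%:R) <= 4%:R :> R.
  by rewrite -[X in _ <= X]e4 ler_powR ?ler1n // ler_pdivrMr // -natrM ler_nat.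
rewrite -[X in X <= _]mul1r ler_wpM2r ?invr_ge0 ?powR_ge0 //.
by rewrite ler_pdivlMr ?mul1r ?powR_gt0.
Qed.

Lemma weight54_exp4 k : (0 < k)%N -> w k ^+ 4 = ((k%:R : R) ^+ 5)^-1.
Proof.
move=> k0; rewrite weight54E exprVn; congr (_^-1).
rewrite -[LHS]powR_mulrn ?powR_ge0 // -powRrM divfK ?pnatr_eq0 //.
by rewrite powR_mulrn // ler0n.
Qed.

End weight54.

Section borel_cantelli.
Variable R : realType.

Lemma nneseries_le_of_partial_sums (u : nat -> R) (C : R) : (forall j, 0 <= u j) ->
  (forall N, \sum_(j < N) u j <= C) -> (\sum_(j <oo) (u j)%:E <= C%:E)%E.
Proof.
move=> u0 hN; apply: lime_le.
  by apply: is_cvg_nneseries => n _ _; rewrite lee_fin.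
by apply: nearW => N; rewrite sumEFin lee_fin big_mkord; exact: hN.
Qed.

Lemma nneseries_lt_of_le_inv_consecutive (u : nat -> \bar R) (C : R) :
  (forall t, 0 <= u t)%E -> (forall t, u t <= (C / (t.+1%:R * t.+2%:R))%:E)%E ->
  (\sum_(t <oo) u t < +oo)%E.
Proof.
move=> u0 uC.
have C0 : 0 <= C.
  have := le_trans (u0 0%N) (uC 0%N); rewrite lee_fin.
  by rewrite pmulr_lge0 // invr_gt0 mulr_gt0 ?ltr0n.
apply: (le_lt_trans (y := C%:E)); last exact: ltry.
apply: le_trans (@nneseries_le_of_partial_sums (fun t => C / (t.+1%:R * t.+2%:R)) C _ _).
- by apply: lee_nneseries => // t _ _; exact: u0.
- by move=> t; rewrite divr_ge0 // mulr_ge0.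
- by move=> N; rewrite -mulr_sumr sum_inv_consecutive ler_piMr // lerBlDr lerDl.
Qed.

Lemma ae_eventually_notin d (T : measurableType d) (mu : {measure set T -> \bar R})
    (F : nat -> set T) : (forall t, measurable (F t)) ->
  (\sum_(t <oo) mu (F t) < +oo)%E ->
  {ae mu, forall w, exists t0, forall t, (t0 <= t)%N -> ~ F t w}.
Proof.
move=> mF Foo; exists (lim_sup_set F); split.
- apply: bigcapT_measurable => n.
  by apply: bigcup_measurable => k _; exact: mF.
- exact: lim_sup_set_cvg0.
move=> w /= notev n _; apply: contrapT => notF.
by apply: notev; exists n => t nt Ft; apply: notF; exists t.
Qed.

End borel_cantelli.

Definition record_tie (k : nat -> nat) (m i j : nat) : Prop :=
  [/\ (i < j)%N, k i = m, k j = m & forall l, (l < j)%N -> l != i -> (k l < m)%N].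

Lemma records_eventually_simple (k : nat -> nat) (m0 n0 : nat) :
  (forall i, (n0 <= i)%N -> (i.+1 < \max_(j < i.+1) k j)%N) ->
  (forall m, (m0 <= m)%N -> forall i j, ~ record_tie k m i j) ->
  forall i, (maxn m0 n0.+1 <= i)%N -> record_time k i -> simple_record_time k i.
Proof.
move=> max_gt no_tie i i0i rec; split => // j ij nsr.
rewrite ltnNge; apply/negP => kji.
set m := k i.
have kjm : k j = m by apply/eqP; rewrite eqn_leq kji nsr.
have im : (i < m)%N.
  have max_le : (\max_(l < i) k l <= m)%N.
    by apply/bigmax_leqP => l _; apply: ltnW; exact: rec.
  have : (i.-1.+1 < \max_(l < i.-1.+1) k l)%N by apply: max_gt; lia.
  by rewrite prednK; [move/leq_trans; apply | lia].
have ex : exists l, (i < l)%N && (k l == m) by exists j; rewrite ij kjm eqxx.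
case: (ex_minnP ex) => j' /andP[ij' /eqP kj'm] j'min.
have j'j : (j' <= j)%N by apply: j'min; rewrite ij kjm eqxx.
apply: (no_tie m _ i j'); first by lia.
split => // l lj' li; case: (ltngtP l i) => [lti|gti|eqi]; last by rewrite eqi eqxx in li.
- exact: rec.
- have : (k l <= m)%N by rewrite -kjm; apply: nsr; lia.
  rewrite leq_eqVlt => /orP[/eqP klm|//].
  by have := j'min l; rewrite gti klm eqxx => /(_ isT); lia.
Qed.

Definition cdf54 {R : realType} (n : nat) : R := \sum_(k < n) law54 k.

Definition tie_value (m i j l : nat) : set nat :=
  if (l == i) || (l == j) then [set m] else [set x | (x < m)%N].

Section iid_law54.
Variables (R : realType) (d : measure_display) (T : measurableType d)
  (P : probability T R) (K : nat -> T -> nat).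
Hypothesis HKmeas : forall i, measurable_fun setT (K i).
Hypothesis Hindep : mutually_independent P K.
Hypothesis Hlaw : forall i k, P (K i @^-1` [set k]) = (law54 k)%:E.

Local Notation c := (@zeta54 R).
Local Notation F := (@cdf54 R).

Lemma measurable_preimK i (A : set nat) : measurable (K i @^-1` A).
Proof. by rewrite -[X in measurable X]setTI; exact: HKmeas. Qed.

Lemma law54_ge0 k : 0 <= law54 k :> R.
Proof. by rewrite -lee_fin -(Hlaw 0) measure_ge0. Qed.

Lemma P_K_lt i n : P (K i @^-1` [set x | (x < n)%N]) = (F n)%:E.
Proof.
elim: n => [|n IH].
  rewrite /cdf54 big_ord0 (_ : _ @^-1` _ = set0) ?measure0 //.
  by apply/seteqP; split => x //=.
rewrite (_ : _ @^-1` _ = K i @^-1` [set x | (x < n)%N] `|` K i @^-1` [set n]).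
  rewrite measureU ?IH ?Hlaw; last 3 first.
  - exact: measurable_preimK.
  - exact: measurable_preimK.
  - by rewrite -subset0 => x [/= h1 h2]; move: h1; rewrite h2 ltnn.
  by rewrite /cdf54 big_ord_recr /= EFinD -IH -(Hlaw i n).
apply/seteqP; split => x /=.
- by rewrite ltnS leq_eqVlt => /orP[/eqP ->|h]; [right|left].
- by case=> [h|->] //; apply: ltnW.
Qed.

Lemma cdf54_ge0 n : 0 <= F n.
Proof. by rewrite sumr_ge0 // => k _; exact: law54_ge0. Qed.

Lemma cdf54_le1 n : F n <= 1.
Proof. by rewrite -lee_fin -(P_K_lt 0) probability_le1 //; exact: measurable_preimK. Qed.

(* If c were 0, every law54 k would vanish (x / 0 = 0), contradicting P setT = 1. *)
Lemma zeta54_gt0 : 0 < c.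
Proof.
have law1 : law54 1 = c^-1 by rewrite /law54 /= powR1 mul1r.
have : 0 <= c by rewrite -invr_ge0 -law1 law54_ge0.
rewrite le_eqVlt => /orP[/eqP c0|//]; exfalso.
have law0 k : law54 k = 0 :> R.
  by rewrite /law54; case: ifP => // _; rewrite -c0 invr0 mulr0.
have : P setT = 0.
  rewrite (_ : setT = \bigcup_(n in setT) (K 0 @^-1` [set n])); last first.
    by apply/seteqP; split => x // _; exists (K 0 x).
  rewrite measure_bigcup //=; last 2 first.
  - by move=> i _; exact: measurable_preimK.
  - by move=> i j _ _ [x [/= -> ->]].
  by apply: eseries0 => i _ _; rewrite Hlaw law0.
by rewrite probability_setT => /eqP; rewrite onee_eq0.
Qed.

Lemma law54E k : (0 < k)%N -> law54 k = weight54 k / c.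
Proof. by rewrite /law54; case: eqP => // ->. Qed.

(* The m values law54 m, ..., law54 (2m - 1) are all at least law54 (2m). *)
Lemma cdf54_le_1_sub m : (0 < m)%N -> F m <= 1 - m%:R * weight54 (2 * m) / c.
Proof.
move=> m0; rewrite lerBrDl; apply: le_trans (cdf54_le1 (2 * m)).
rewrite /cdf54 mul2n -addnn big_split_ord /= [leLHS]addrC lerD2l.
have -> : m%:R * weight54 (m + m) / c = \sum_(k < m) weight54 (m + m) / c.
  by rewrite sumr_const card_ord -mulrA mulr_natl.
apply: ler_sum => k _.
rewrite law54E ?addn_gt0 ?m0 // ler_wpM2r ?invr_ge0 ?(ltW zeta54_gt0) //.
by rewrite weight54_nonincreasing // addn_gt0 m0 /= leq_add2l ltnW.
Qed.

Lemma cdf54_lt1 m : (0 < m)%N -> F m < 1.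
Proof.
move=> m0; apply: le_lt_trans (cdf54_le_1_sub m0) _.
by rewrite ltrBlDr ltrDl divr_gt0 ?mulr_gt0 ?ltr0n ?weight54_gt0 ?muln_gt0 ?zeta54_gt0.
Qed.

Lemma law54_div_tail_le m : (0 < m)%N -> law54 m / (1 - F m) <= 4%:R / m%:R.
Proof.
move=> m0; have c0 := zeta54_gt0.
have w0 : 0 < weight54 (2 * m) :> R by rewrite weight54_gt0 // muln_gt0.
have s0 : 0 < m%:R * weight54 (2 * m) / c by rewrite divr_gt0 // mulr_gt0 // ltr0n.
have Fm := cdf54_le_1_sub m0.
rewrite ler_pdivrMr ?subr_gt0; last lra.
apply: le_trans (_ : 4%:R / m%:R * (m%:R * weight54 (2 * m) / c) <= _); last first.
  by rewrite ler_wpM2l ?divr_ge0 ?ler0n //; lra.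
have mn0 : m%:R != 0 :> R by rewrite pnatr_eq0 -lt0n.
rewrite (_ : 4%:R / m%:R * _ = 4%:R * weight54 (2 * m) / c); last first.
  by field; rewrite gt_eqF.
by rewrite law54E // ler_wpM2r ?invr_ge0 ?(ltW c0) //; exact: weight54_le_double.
Qed.

Definition all_below (n M : nat) : set T :=
  \bigcap_(l in [set` iota 0 n]) (K l @^-1` [set x | (x < M)%N]).

Lemma all_below_measurable n M : measurable (all_below n M).
Proof. by apply: bigcap_measurableType => l _; exact: measurable_preimK. Qed.

Lemma P_all_below n M : P (all_below n M) = (F M ^+ n)%:E.
Proof.
rewrite /all_below (Hindep (fun _ => [set x | (x < M)%N]) (iota_uniq 0 n)).
under eq_bigr => l _ do rewrite P_K_lt.
by rewrite prodEFin -[n in iota 0 n]subn0 prodr_const_nat subn0.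
Qed.

(* With M = n + 1, s = M P(K = 2M) of order M^(-1/4) and m = n %/ 4, the
   bound (m s)^-4 of [exprn_le_inv_pow4] is of order n^-3; the shift by 8
   ensures m >= 2. *)
Lemma P_all_below_le t : (P (all_below (t + 8) (t + 9)) <=
  ((2 ^+ 17 * c ^+ 4) / (t.+1%:R * t.+2%:R))%:E)%E.
Proof.
set n := (t + 8)%N; set M := n.+1; set m := (n %/ 4)%N.
have c0 := zeta54_gt0.
have m0 : (0 < m)%N by rewrite /m /n; lia.
have m4 : (4 * m <= n)%N by rewrite /m; lia.
set s := M%:R * weight54 (2 * M) / c.
have s0 : 0 < s by rewrite divr_gt0 // mulr_gt0 ?ltr0n // weight54_gt0 // muln_gt0.
have -> : (t + 9 = M)%N by rewrite /M /n addnS.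
rewrite P_all_below lee_fin.
apply: le_trans (exprn_le_inv_pow4 (cdf54_ge0 M) s0 (cdf54_le_1_sub (ltn0Sn n)) m0 m4) _.
have -> : (m%:R * s) ^+ 4 = m%:R ^+ 4 / (32%:R * M%:R * c ^+ 4).
  rewrite /s !exprMn weight54_exp4 ?muln_gt0 // natrM exprMn exprVn.
  have hM : M%:R != 0 :> R by rewrite pnatr_eq0.
  rewrite (_ : 32%:R = 2%:R ^+ 5 :> R); last by rewrite -natrX.
  by field; rewrite hM gt_eqF.
have cube_le : M%:R * t.+1%:R * t.+2%:R <= 4096%:R * m%:R ^+ 4 :> R.
  by rewrite -!natrM -natrX -natrM ler_nat cube_le_quarter_pow4.
have m4_gt0 : 0 < m%:R ^+ 4 :> R by rewrite exprn_gt0 // ltr0n.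
have c4_ge0 : 0 <= 32%:R * c ^+ 4 by rewrite mulr_ge0 ?ler0n // exprn_ge0 // ltW.
rewrite invf_div ler_pdivrMr // [leRHS]mulrAC ler_pdivlMr ?mulr_gt0 ?ltr0n //.
have -> : 32%:R * M%:R * c ^+ 4 * (t.+1%:R * t.+2%:R) =
    32%:R * c ^+ 4 * (M%:R * t.+1%:R * t.+2%:R) by ring.
have -> : 2 ^+ 17 * c ^+ 4 * m%:R ^+ 4 = 32%:R * c ^+ 4 * (4096%:R * m%:R ^+ 4).
  by rewrite (_ : 2 ^+ 17 = 32%:R * 4096%:R :> R) -?natrM -?natrX //; ring.
by rewrite ler_wpM2l.
Qed.

Lemma ae_max_gt : {ae P, forall w, exists n0, forall i, (n0 <= i)%N ->
  (i.+1 < \max_(j < i.+1) K j w)%N}.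
Proof.
have : {ae P, forall w, exists t0, forall t, (t0 <= t)%N -> ~ all_below (t + 8) (t + 9) w}.
  apply: ae_eventually_notin => [t|]; first exact: all_below_measurable.
  apply: nneseries_lt_of_le_inv_consecutive => t; first exact: measure_ge0.
  exact: P_all_below_le.
apply: filterS => w [t0 notbelow]; exists (t0 + 7)%N => i t0i.
have : ~ all_below i.+1 i.+2 w.
  have -> : i.+2 = (i - 7 + 9)%N by lia.
  have -> : i.+1 = (i - 7 + 8)%N by lia.
  by apply: notbelow; lia.
move=> /existsNP [l /not_implyP [l_iota /negP]].
have : l \in iota 0 i.+1 := l_iota; rewrite mem_iota => /andP[_ li] /=.
rewrite -leqNgt => Kl; apply: leq_trans Kl (leq_bigmax (Ordinal li)).
Qed.

Definition tie_event (m i j : nat) : set T :=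
  \bigcap_(l in [set` iota 0 j.+1]) (K l @^-1` tie_value m i j l).

Lemma tie_event_measurable m i j : measurable (tie_event m i j).
Proof. by apply: bigcap_measurableType => l _; exact: measurable_preimK. Qed.

Lemma P_tie_event m i j : (i < j)%N ->
  P (tie_event m i j) = (law54 m ^+ 2 * F m ^+ j.-1)%:E.
Proof.
move=> ij; rewrite /tie_event (Hindep (tie_value m i j) (iota_uniq 0 j.+1)).
rewrite (eq_bigr (fun l => (if (l == i) || (l == j) then law54 m else F m)%:E));
  last by move=> l _; rewrite /tie_value; case: ifP => _; rewrite ?Hlaw ?P_K_lt.
have -> : iota 0 j.+1 = index_iota 0 j.+1 by rewrite /index_iota subn0.
rewrite prodEFin big_nat_recr //= eqxx orbT.
rewrite (@eq_big_nat _ _ _ 0 j _ (fun l => if l == i then law54 m else F m)); last first.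
  by move=> l /andP[_ lj]; rewrite (ltn_eqF lj) orbF.
by rewrite prod_nat_if_eq // expr2 mulrAC.
Qed.

Definition tie_at_time (m j : nat) : set T :=
  \big[setU/set0]_(i < j.+1) tie_event m i j.+1.

Lemma tie_at_time_measurable m j : measurable (tie_at_time m j).
Proof. by apply: bigsetU_measurable => i _; exact: tie_event_measurable. Qed.

Lemma P_tie_at_time_le m j :
  (P (tie_at_time m j) <= (j.+1%:R * (law54 m ^+ 2 * F m ^+ j))%:E)%E.
Proof.
apply: le_trans (Boole_inequality P (A := fun i => tie_event m i j.+1) _) _.
  by move=> i _; exact: tie_event_measurable.
rewrite (eq_bigr (fun i : 'I_j.+1 => (law54 m ^+ 2 * F m ^+ j)%:E)).
  by rewrite sumEFin sumr_const card_ord mulr_natl.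
by move=> i _ /=; rewrite P_tie_event.
Qed.

Definition tie_at (m : nat) : set T := \bigcup_j tie_at_time m j.

Lemma tie_at_measurable m : measurable (tie_at m).
Proof. by apply: bigcup_measurable => j _; exact: tie_at_time_measurable. Qed.

Lemma P_tie_at_le m : F m < 1 ->
  (P (tie_at m) <= ((law54 m / (1 - F m)) ^+ 2)%:E)%E.
Proof.
move=> Fm1; have F0 := cdf54_ge0 m.
apply: le_trans (measure_sigma_subadditive P (tie_at_time_measurable m)
  (tie_at_measurable m) (fun w tw => tw)) _.
apply: le_trans (lee_nneseries
  (v := fun j => (j.+1%:R * (law54 m ^+ 2 * F m ^+ j))%:E) _ _) _.
- by move=> j _ _; exact: measure_ge0.
- by move=> j _; exact: P_tie_at_time_le.
apply: nneseries_le_of_partial_sums => [j|N].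
  by rewrite mulr_ge0 ?ler0n // mulr_ge0 ?exprn_ge0 ?law54_ge0.
under eq_bigr do rewrite mulrCA.
rewrite -mulr_sumr expr_div_n ler_wpM2l ?exprn_ge0 ?law54_ge0 //.
by apply: sum_deriv_geom_le; rewrite F0.
Qed.

Lemma record_tie_tie_at w m i j : record_tie (fun l => K l w) m i j -> tie_at m w.
Proof.
case=> ij Ki Kj below; exists j.-1 => //.
rewrite /tie_at_time -(bigcup_mkord _ (fun i => tie_event m i j.-1.+1)) prednK; last by lia.
exists i => //= l l_iota; have : l \in iota 0 j.+1 := l_iota.
rewrite mem_iota => /andP[_ lj]; rewrite /tie_value.
have [->|li] := eqVneq l i => //=; have [->|lj'] := eqVneq l j => //=.
by apply: below => //; rewrite ltn_neqAle lj' -ltnS.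
Qed.

Lemma P_tie_at_le_inv_sq m : (0 < m)%N -> (P (tie_at m) <= (16%:R / m%:R ^+ 2)%:E)%E.
Proof.
move=> m0; apply: le_trans (P_tie_at_le (cdf54_lt1 m0)) _.
rewrite lee_fin (_ : 16%:R = 4%:R ^+ 2 :> R) -?expr_div_n; last by rewrite -natrX.
rewrite lerXn2r ?nnegrE ?divr_ge0 ?ler0n ?law54_ge0 ?subr_ge0 ?cdf54_le1 //.
exact: law54_div_tail_le.
Qed.

Lemma ae_no_large_record_tie : {ae P, forall w, exists m0, forall m, (m0 <= m)%N ->
  forall i j, ~ record_tie (fun l => K l w) m i j}.
Proof.
have : {ae P, forall w, exists t0, forall t, (t0 <= t)%N -> ~ tie_at t.+1 w}.
  apply: ae_eventually_notin => [t|]; first exact: tie_at_measurable.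
  apply: (@nneseries_lt_of_le_inv_consecutive _ _ 32%:R) => t; first exact: measure_ge0.
  apply: le_trans (P_tie_at_le_inv_sq (ltn0Sn t)) _; rewrite lee_fin.
  rewrite ler_pdivrMr ?exprn_gt0 ?ltr0n // mulrAC ler_pdivlMr ?mulr_gt0 ?ltr0n //.
  have t1 : 1 <= t.+1%:R :> R by rewrite ler1n.
  by rewrite expr2 -[t.+2%:R]natr1; nra.
apply: filterS => w [t0 notie]; exists t0.+1 => m t0m i j /record_tie_tie_at.
by rewrite -(prednK (leq_ltn_trans (leq0n t0) t0m)); apply: notie; lia.
Qed.

End iid_law54.

Theorem mainTheorem5 (R : realType) (d : measure_display) (T : measurableType d)
  (P : probability T R) (K : nat -> T -> nat)
  (HKmeas : forall i, measurable_fun setT (K i))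
  (Hindep : mutually_independent P K)
  (Hlaw : forall i k, P (K i @^-1` [set k]) = (law54 k)%:E) :
  {ae P, forall w,
    exists i0 : nat,
      (forall i, (i0 <= i)%N -> record_time (fun j => K j w) i ->
                 simple_record_time (fun j => K j w) i) /\
      (forall i, (i0 <= i)%N -> (i.+1 < \max_(j < i.+1) K j w)%N)}.
Proof.
apply: filterS2 (ae_no_large_record_tie HKmeas Hindep Hlaw) (ae_max_gt HKmeas Hindep Hlaw).
move=> w [m0 no_tie] [n0 max_gt]; exists (maxn m0 n0.+1); split => i i0i.
- exact: records_eventually_simple max_gt no_tie i i0i.
- by apply: max_gt; lia.
Qed.
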